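(* Let $\alpha>0$, $\beta>0$, $D>0$, $T\ge1$, $X=[-D/2,D/2]\subseteq\mathbb R$ and $x_0=0$. For $\theta=(\theta_1,\dots,\theta_T)'\in X^T$ let $f_t(x)=\frac\alpha2(x-\theta_t)^2$ and $$C_1^T(x)=\sum_{t=1}^T\Big(f_t(x_t)+\frac\beta2(x_t-x_{t-1})^2\Big).$$ Then for any $\theta\in X^T$ there exists a matrix $A=(a_{t,s})\in\mathbb R^{T\times T}$ such that $x^*=A\theta$, where $x^*=\arg\min_{x\in X^T}C_1^T(x)$. Moreover, the entries of $A$ satisfy $$a_{t,t+\tau}\ge\frac{\alpha}{\alpha+\beta}(1-\rho)\rho^{\tau}$$ for all $t$ and all $\tau\ge0$ with $t+\tau\le T$, where $Q_f=\frac{\alpha+4\beta}{\alpha}$ and $\rho=\frac{\sqrt{Q_f}-1}{\sqrt{Q_f}+1}$. *)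

From HB Require Import structures.
From mathcomp Require Import all_boot all_order all_algebra.
From mathcomp Require Import reals.
Set Implicit Arguments. Unset Strict Implicit. Unset Printing Implicit Defensive.
Import Order.TTheory GRing.Theory Num.Theory.
Local Open Scope ring_scope.

Definition vget (R : realType) (T : nat) (x : 'cV[R]_T) (k : nat) : R :=
  if @insub nat (fun k => (k < T)%N) 'I_T k is Some i then x i 0 else 0.

(* previous decision x_{t-1}, with x_0 = 0 (0-based: predecessor of index 0 is x0 = 0) *)
Definition prev (R : realType) (T : nat) (x : 'cV[R]_T) (t : 'I_T) : R :=
  if (t == 0 :> nat) then 0 else vget x (t.-1).

Definition cost (R : realType) (T : nat) (alpha beta : R) (theta x : 'cV[R]_T) : R :=
  \sum_(t < T) (alpha / 2 * (x t 0 - theta t 0) ^+ 2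
                + beta / 2 * (x t 0 - prev x t) ^+ 2).

Definition inXT (R : realType) (T : nat) (D : R) (x : 'cV[R]_T) : Prop :=
  forall t : 'I_T, - (D / 2) <= x t 0 <= D / 2.

Definition is_argmin (R : realType) (T : nat) (alpha beta D : R) (theta x : 'cV[R]_T) : Prop :=
  inXT D x /\ forall y : 'cV[R]_T, inXT D y -> cost alpha beta theta x <= cost alpha beta theta y.

Definition Qf (R : realType) (alpha beta : R) : R := (alpha + 4 * beta) / alpha.
Definition rho (R : realType) (alpha beta : R) : R :=
  (Num.sqrt (Qf alpha beta) - 1) / (Num.sqrt (Qf alpha beta) + 1).

From Pilot Require Import Defs.
From HB Require Import structures.
From mathcomp Require Import all_boot all_order all_algebra.
From mathcomp Require Import reals.
From mathcomp Require Import ring lra zify.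
Import Order.TTheory GRing.Theory Num.Theory.
Local Open Scope ring_scope.
Set Implicit Arguments. Unset Strict Implicit. Unset Printing Implicit Defensive.

(* The cost is the quadratic form (alpha/2)|x - theta|^2 + (beta/2)|Dx|^2, with D
   the backward difference (x_0 = 0), so its unconstrained minimiser solves
   H x = alpha theta for H = alpha I + beta D^T D, and A = alpha H^-1.  H has
   nonpositive off-diagonal entries and row sums at least alpha, hence obeys a
   discrete minimum principle: H w <= H v entrywise implies w <= v.  Comparing x
   with the constant vectors +-D/2 shows that x lies in X^T, so it is also the
   constrained minimiser.  For the entries, let rho be the root in (0,1) of
   beta rho^2 - (alpha + 2 beta) rho + beta = 0.  The Green function of the
   infinite-horizon operator with pole at s, built from rho^|k - s|, is a
   subsolution H w <= e_s (truncating at T only drops a nonnegative term), so it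
   lies below column s of H^-1, and for t <= s it is at least
   (1 - rho) rho^(s - t) / (alpha + beta). *)

Section Zmatrix.
Variables (R : realFieldType) (n : nat) (M : 'M[R]_n) (c : R).
Hypotheses (M_offdiag : forall i j, i != j -> M i j <= 0)
  (c_gt0 : 0 < c) (M_rowsum : forall i, c <= \sum_j M i j).

Lemma Zmx_min_principle (v : 'cV[R]_n) :
  (forall i, 0 <= (M *m v) i 0) -> forall i, 0 <= v i 0.
Proof.
move=> Mv_ge0 i.
have [m _ m_min] := @arg_minP _ _ _ i xpredT (fun j => v j 0) isT.
suff vm_ge0 : 0 <= v m 0 by apply: le_trans vm_ge0 (m_min i isT).
have Mv_m : (M *m v) m 0
    = (\sum_j M m j) * v m 0 + \sum_j M m j * (v j 0 - v m 0).
  by rewrite mxE mulr_suml -big_split; apply: eq_bigr => j _ /=; ring.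
have cross_le0 : \sum_j M m j * (v j 0 - v m 0) <= 0.
  apply: sumr_le0 => j _; have [-> | jm] := eqVneq j m; first by rewrite subrr mulr0.
  by rewrite mulr_le0_ge0 ?M_offdiag 1?eq_sym ?subr_ge0 ?m_min.
rewrite -(pmulr_rge0 _ (lt_le_trans c_gt0 (M_rowsum m))).
by have := Mv_ge0 m; rewrite Mv_m; lra.
Qed.

Lemma Zmx_monotone (v w : 'cV[R]_n) :
  (forall i, (M *m w) i 0 <= (M *m v) i 0) -> forall i, w i 0 <= v i 0.
Proof.
move=> Mwv i; have vw_ge0 : forall j, 0 <= (v - w) j 0.
  by apply: Zmx_min_principle => j; have := Mwv j; rewrite mulmxBr !mxE subr_ge0.
by have := vw_ge0 i; rewrite !mxE subr_ge0.
Qed.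

Lemma Zmx_unit : M \in unitmx.
Proof.
rewrite -unitmx_tr -row_free_unit; apply/inj_row_free => v vM0.
have Mv0 : M *m v^T = 0 by rewrite -[M]trmxK -trmx_mul vM0 trmx0.
have v_ge0 : forall j, 0 <= v^T j 0.
  by apply: Zmx_min_principle => i; rewrite Mv0 mxE.
have Nv_ge0 : forall j, 0 <= (- v^T) j 0.
  by apply: Zmx_min_principle => i; rewrite mulmxN Mv0 oppr0 mxE.
apply/rowP => j; apply/eqP; rewrite eq_le.
by have := v_ge0 j; have := Nv_ge0 j; rewrite !mxE oppr_ge0 => -> ->.
Qed.

Lemma Zmx_norm_le (b : R) (v : 'cV[R]_n) : 0 <= b ->
  (forall i, `|(M *m v) i 0| <= c * b) -> forall i, `|v i 0| <= b.
Proof.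
move=> b_ge0 Mv_le.
have Mconst j : c * b <= (M *m (const_mx b : 'cV[R]_n)) j 0.
  rewrite mxE; under eq_bigr do rewrite mxE.
  by rewrite -mulr_suml ler_wpM2r.
have le_b (u : 'cV[R]_n) :
    (forall j, `|(M *m u) j 0| <= c * b) -> forall i, u i 0 <= b.
  move=> Mu_le i; have := Zmx_monotone (v := const_mx b) (w := u) _ i.
  rewrite mxE; apply=> j.
  by apply: le_trans (ler_norm _) _; apply: le_trans (Mu_le j) (Mconst j).
move=> i; rewrite ler_norml le_b // andbT lerNl.
have := le_b (- v) _ i; rewrite mxE; apply=> j.
by rewrite mulmxN mxE normrN.
Qed.
End Zmatrix.

Definition vdot (R : pzRingType) (n : nat) (u v : 'cV[R]_n) : R := (u^T *m v) 0 0.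

Section QuadraticCost.
Variable R : realFieldType.

Lemma vdotE n (u v : 'cV[R]_n) : vdot u v = \sum_i u i 0 * v i 0.
Proof. by rewrite /vdot mxE; apply: eq_bigr => i _; rewrite mxE. Qed.

Lemma vdot_mulmxl p n (M : 'M[R]_(p, n)) u v :
  vdot (M *m u) v = vdot u (M^T *m v).
Proof. by rewrite /vdot trmx_mul mulmxA. Qed.

Lemma vdot_sqrD n (u v : 'cV[R]_n) :
  vdot (u + v) (u + v) = vdot u u + 2 * vdot u v + vdot v v.
Proof.
rewrite !vdotE mulr_sumr -!big_split; apply: eq_bigr => i _ /=.
by rewrite !mxE; ring.
Qed.

Lemma vdot_sqr_ge0 n (u : 'cV[R]_n) : 0 <= vdot u u.
Proof. by rewrite vdotE sumr_ge0 // => i _; rewrite -expr2 sqr_ge0. Qed.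

Lemma quadratic_argmin p n (a b : R) (M : 'M[R]_(p, n)) (theta x : 'cV[R]_n) :
    0 <= a -> 0 <= b -> (a%:M + b *: (M^T *m M)) *m x = a *: theta ->
  forall y, a / 2 * vdot (x - theta) (x - theta) + b / 2 * vdot (M *m x) (M *m x)
         <= a / 2 * vdot (y - theta) (y - theta) + b / 2 * vdot (M *m y) (M *m y).
Proof.
move=> a_ge0 b_ge0 Hx y; set h := y - x.
have -> : y - theta = h + (x - theta) by rewrite addrA subrK.
have -> : M *m y = M *m h + M *m x by rewrite -mulmxDr subrK.
have stationary : a * vdot h (x - theta) + b * vdot (M *m h) (M *m x) = 0.
  have grad0 : a *: (x - theta) + b *: (M^T *m (M *m x)) = 0.
    by rewrite scalerBr addrAC mulmxA scalemxAl -[a *: x]mul_scalar_mx -mulmxDl Hx subrr.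
  have vdot_lin (u w : 'cV[R]_n) : a * vdot h u + b * vdot h w = vdot h (a *: u + b *: w).
    by rewrite !vdotE !mulr_sumr -big_split; apply: eq_bigr => i _ /=; rewrite !mxE; ring.
  by rewrite vdot_mulmxl vdot_lin grad0 /vdot mulmx0 mxE.
rewrite [vdot (h + _) _]vdot_sqrD [vdot (M *m h + _) _]vdot_sqrD.
have := mulr_ge0 a_ge0 (vdot_sqr_ge0 h); have := mulr_ge0 b_ge0 (vdot_sqr_ge0 (M *m h)).
lra.
Qed.
End QuadraticCost.

Lemma rho_spec (R : realType) (alpha beta : R) : 0 < alpha -> 0 < beta ->
  [/\ 0 < rho alpha beta, rho alpha beta < 1 &
      beta * (1 + rho alpha beta ^+ 2) = (alpha + 2 * beta) * rho alpha beta].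
Proof.
move=> alpha_gt0 beta_gt0.
have Qf_gt1 : 1 < Qf alpha beta by rewrite /Qf ltr_pdivlMr // mul1r; lra.
rewrite /rho; set q := Qf alpha beta in Qf_gt1 *; set sq := Num.sqrt q.
have sq2 : sq ^+ 2 = q by rewrite sqr_sqrtr //; lra.
have sq_gt1 : 1 < sq by have := sqrtr_ge0 q; rewrite -/sq; nra.
have beta_sq : beta = alpha * (sq ^+ 2 - 1) / 4 by rewrite sq2 /q /Qf; field; lra.
split; first by apply: divr_gt0; lra.
  by rewrite ltr_pdivrMr; lra.
by rewrite beta_sq; field; lra.
Qed.

Section Trajectory.
Variables (R : realType) (T : nat).
Implicit Types (x : 'cV[R]_T) (W : nat -> R).

Lemma vget_lt x k (kT : (k < T)%N) : vget x k = x (Ordinal kT) 0.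
Proof.
rewrite /vget; case: insubP => [i _ iE | /negP //].
by congr (x _ 0); apply: val_inj.
Qed.

Lemma vget_out x k : (T <= k)%N -> vget x k = 0.
Proof. by rewrite /vget; case: insubP => [i + _|//]; rewrite ltnNge => /negbTE->. Qed.

Lemma vgetE x k : vget x k = \sum_(j < T) ((j : nat) == k)%:R * x j 0.
Proof.
case: (ltnP k T) => kT.
  rewrite (vget_lt x kT) (bigD1 (Ordinal kT)) //= eqxx mul1r big1 ?addr0 // => j jk.
  rewrite (_ : (j : nat) == k = false) ?mul0r //.
  by apply: contraNF jk => /eqP jk; apply/eqP/val_inj.
rewrite vget_out // big1 // => j _.
by rewrite (_ : (j : nat) == k = false) ?mul0r // ltn_eqF // (leq_trans (ltn_ord j) kT).
Qed.

(* [traj x k] is the paper's x_k (1-based, with x_0 = 0), extended by 0 beyond T. *)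
Definition traj x (k : nat) : R := if k is k'.+1 then vget x k' else 0.

Lemma traj_ord x (t : 'I_T) : traj x t.+1 = x t 0.
Proof. by rewrite /= (vget_lt x (ltn_ord t)); congr (x _ 0); apply: val_inj. Qed.

Lemma prev_traj x (t : 'I_T) : Defs.prev x t = traj x t.
Proof. by case: t => [[|t] tT]. Qed.

Lemma traj_col W k : W 0%N = 0 -> (k <= T)%N -> traj (\col_(i < T) W i.+1) k = W k.
Proof. by case: k => [|k] //= _ kT; rewrite (vget_lt _ kT) mxE. Qed.

Lemma traj_out x k : (T < k)%N -> traj x k = 0.
Proof. by case: k => [|k] //= kT; rewrite vget_out. Qed.
End Trajectory.

Section Tracking.
Variables (R : realType) (T : nat) (alpha beta : R).
Hypotheses (alpha_gt0 : 0 < alpha) (beta_gt0 : 0 < beta).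
Implicit Types (x u : 'cV[R]_T) (W : nat -> R).

Definition diffmx : 'M[R]_T := \matrix_(i, j) (((i : nat) == j)%:R - ((i : nat) == j.+1)%:R).

Lemma diffmxE x (t : 'I_T) : (diffmx *m x) t 0 = traj x t.+1 - traj x t.
Proof.
rewrite mxE; under eq_bigr do rewrite mxE mulrBl.
rewrite sumrB /= vgetE; congr (_ - _); first by apply: eq_bigr => j _; rewrite eq_sym.
case: t => [[|t] tT] /=; first by rewrite big1 // => j _; rewrite mul0r.
by rewrite vgetE; apply: eq_bigr => j _; rewrite eqSS eq_sym.
Qed.

Lemma diffmx_trE u (t : 'I_T) : (diffmx^T *m u) t 0 = traj u t.+1 - traj u t.+2.
Proof.
rewrite mxE; under eq_bigr do rewrite !mxE mulrBl.
by rewrite sumrB /= !vgetE.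
Qed.

Lemma cost_vdot theta x : cost alpha beta theta x
  = alpha / 2 * vdot (x - theta) (x - theta) + beta / 2 * vdot (diffmx *m x) (diffmx *m x).
Proof.
rewrite /cost !vdotE !mulr_sumr -big_split; apply: eq_bigr => t _ /=.
by rewrite diffmxE prev_traj traj_ord !mxE; ring.
Qed.

Definition hessmx : 'M[R]_T := alpha%:M + beta *: (diffmx^T *m diffmx).

Lemma hessmxE x (t : 'I_T) : (hessmx *m x) t 0 = alpha * traj x t.+1
  + beta * (traj x t.+1 - traj x t) + beta * (t.+1 < T)%:R * (traj x t.+1 - traj x t.+2).
Proof.
rewrite mulmxDl mul_scalar_mx -scalemxAl -mulmxA 3!mxE diffmx_trE traj_ord diffmxE -traj_ord.
case: ltnP => tT.
  have -> : traj (diffmx *m x) t.+2 = traj x t.+2 - traj x t.+1.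
    by rewrite (traj_ord _ (Ordinal tT)) diffmxE.
  by rewrite mulr1; ring.
by rewrite [traj (diffmx *m x) _]traj_out // mulr0 mul0r; ring.
Qed.

Definition hess_stencil (a b c : R) : R := alpha * b + beta * (2 * b - a - c).

Lemma hessmx_col W (t : 'I_T) : W 0%N = 0 ->
  (hessmx *m \col_(i < T) W i.+1) t 0
    = hess_stencil (W t) (W t.+1) (W t.+2) - (T == t.+1)%:R * beta * (W t.+1 - W t.+2).
Proof.
move=> W0; have tT := ltn_ord t.
rewrite hessmxE /hess_stencil (traj_col W0 (ltnW tT)) (traj_col W0 tT).
case: (ltnP t.+1 T) => [t1T | Tt1].
  by rewrite traj_col // gtn_eqF // mulr1 mul0r; ring.
by rewrite eqn_leq Tt1 tT mulr0 mul0r addr0 mul1r; ring.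
Qed.

Lemma hessmx_offdiag i j : i != j -> hessmx i j <= 0.
Proof.
move=> ij; pose W k : R := (k == j.+1)%:R.
have -> : hessmx i j = (hessmx *m \col_(k < T) W k.+1) i 0.
  have -> : \col_(k < T) W k.+1 = delta_mx j 0 by apply/colP => k; rewrite !mxE /W eqSS andbT.
  by rewrite -colE [RHS]mxE.
rewrite hessmx_col // /hess_stencil.
have -> : W i.+1 = 0 by rewrite /W eqSS -[_ == _]/(i == j) (negbTE ij).
have bW_ge0 k : 0 <= beta * W k by rewrite pmulr_rge0 ?ler0n.
have : 0 <= (1 - (T == i.+1)%:R) * (beta * W i.+2).
  by apply: mulr_ge0 => //; rewrite subr_ge0; case: (_ == _).
have := bW_ge0 i; lra.
Qed.

Lemma hessmx_rowsum i : alpha <= \sum_j hessmx i j.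
Proof.
pose W (k : nat) : R := (k != 0)%:R.
have -> : \sum_j hessmx i j = (hessmx *m \col_(k < T) W k.+1) i 0.
  by rewrite [RHS]mxE; apply: eq_bigr => j _; rewrite [X in _ * X]mxE mulr1.
rewrite hessmx_col // /hess_stencil /W /= subrr mulr0 subr0 mulr1 lerDl pmulr_rge0 //.
have : ((i : nat) != 0)%:R <= 1 :> R by rewrite lern1 leq_b1.
lra.
Qed.

Lemma hessmx_unit : hessmx \in unitmx.
Proof. exact: (Zmx_unit hessmx_offdiag alpha_gt0 hessmx_rowsum). Qed.

Lemma hessmx_argmin D theta x : 0 <= D -> inXT D theta ->
  hessmx *m x = alpha *: theta -> is_argmin alpha beta D theta x.
Proof.
move=> D_ge0 theta_in Hx; split => [t | y _]; last first.
  by rewrite !cost_vdot; apply: quadratic_argmin; rewrite ?ltW.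
rewrite -ler_norml; apply: (Zmx_norm_le hessmx_offdiag alpha_gt0 hessmx_rowsum) => [|i].
  by rewrite divr_ge0.
by rewrite Hx mxE normrM gtr0_norm // ler_pM2l // ler_norml theta_in.
Qed.

Section GreenFunction.
Variable r : R.
Hypotheses (r_gt0 : 0 < r) (r_lt1 : r < 1)
  (r_root : beta * (1 + r ^+ 2) = (alpha + 2 * beta) * r).

Lemma hess_stencilC a b c : hess_stencil a b c = hess_stencil c b a.
Proof. by rewrite /hess_stencil; ring. Qed.

Lemma hess_stencil_geom d : hess_stencil (r ^+ d) (r ^+ d.+1) (r ^+ d.+2) = 0.
Proof.
apply: (@eq_trans _ _ (r ^+ d * ((alpha + 2 * beta) * r - beta * (1 + r ^+ 2)))).
  by rewrite /hess_stencil !exprS; ring.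
by rewrite r_root subrr mulr0.
Qed.

(* The free-space kernel r^|k - (s+1)| minus its reflection r^(k + s + 1), so that
   it vanishes at k = 0 (indices shifted as in [traj]); the factor normalises the
   stencil at the pole, where it reads (r, 1, r). *)
Definition green (s k : nat) : R :=
  (alpha + 2 * beta * (1 - r))^-1 * (r ^+ `|k - s.+1| - r ^+ (k + s.+1)).

Lemma green0 s : green s 0 = 0.
Proof. by rewrite /green dist0n add0n subrr mulr0. Qed.

Lemma green_den_gt0 : 0 < alpha + 2 * beta * (1 - r).
Proof. by rewrite -mulrA ltr_wpDr ?ltW // pmulr_rgt0 // pmulr_rgt0 // subr_gt0. Qed.

Lemma green_stencil s k :
  hess_stencil (green s k) (green s k.+1) (green s k.+2) = (k == s)%:R.
Proof.
rewrite /green; set c := _^-1.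
have lin a1 b1 c1 a2 b2 c2 : hess_stencil (c * (a1 - a2)) (c * (b1 - b2)) (c * (c1 - c2))
    = c * (hess_stencil a1 b1 c1 - hess_stencil a2 b2 c2).
  by rewrite /hess_stencil; ring.
rewrite lin !addSn hess_stencil_geom subr0.
case: (ltngtP k s) => ks.
- have -> : (`|k - s.+1| = (s - k.+1).+2)%N by rewrite distnEr; lia.
  have -> : (`|k.+1 - s.+1| = (s - k.+1).+1)%N by rewrite distnEr; lia.
  have -> : (`|k.+2 - s.+1| = s - k.+1)%N by rewrite distnEr; lia.
  by rewrite hess_stencilC hess_stencil_geom mulr0.
- have -> : (`|k - s.+1| = k - s.+1)%N by rewrite distnEl; lia.
  have -> : (`|k.+1 - s.+1| = (k - s.+1).+1)%N by rewrite distnEl; lia.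
  have -> : (`|k.+2 - s.+1| = (k - s.+1).+2)%N by rewrite distnEl; lia.
  by rewrite hess_stencil_geom mulr0.
- rewrite ks distnS distnn distSn /hess_stencil expr0 expr1 /c.
  rewrite (_ : alpha * 1 + _ = alpha + 2 * beta * (1 - r)); last by ring.
  by rewrite mulVf ?gt_eqF ?green_den_gt0.
Qed.

Lemma green_antitone s k : (s <= k)%N -> green s k.+2 <= green s k.+1.
Proof.
move=> sk; rewrite /green ler_pM2l ?invr_gt0 ?green_den_gt0 //.
have -> : (`|k.+2 - s.+1| = (k - s).+1)%N by rewrite distnEl; lia.
have -> : (`|k.+1 - s.+1| = k - s)%N by rewrite distnEl; lia.
rewrite !addSn !exprS; set a := r ^+ (k - s); set b := r ^+ (k + s.+1).
have b_le_a : b <= a by apply: ler_wiXn2l; rewrite ?ltW //; lia.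
have rb_le_b : r * b <= b by rewrite ger_pMl ?exprn_gt0 // ltW.
rewrite -subr_ge0 (_ : _ - _ = (1 - r) * (a - r * b)); last by ring.
by apply: mulr_ge0; rewrite subr_ge0 ?(le_trans rb_le_b b_le_a) ?ltW.
Qed.

Lemma green_factor_ge :
  (1 - r) / (alpha + beta) <= (alpha + 2 * beta * (1 - r))^-1 * (1 - r ^+ 2).
Proof.
have den_gt0 := green_den_gt0.
rewrite -subr_ge0 (_ : _ - _ = (1 - r)
    * (beta * r * (1 + r) + ((alpha + 2 * beta) * r - beta * (1 + r ^+ 2)))
    / (alpha + 2 * beta * (1 - r)) / (alpha + beta)).
  rewrite -r_root subrr addr0.
  have r1_gt0 : 0 < 1 - r by rewrite subr_gt0.
  apply/ltW/divr_gt0; last exact: addr_gt0.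
  apply: divr_gt0 => //; apply: (mulr_gt0 r1_gt0).
  exact: mulr_gt0 (mulr_gt0 beta_gt0 r_gt0) (addr_gt0 ltr01 r_gt0).
by field; rewrite !gt_eqF // addr_gt0.
Qed.

Lemma green_lower s t : (t <= s)%N ->
  (1 - r) / (alpha + beta) * r ^+ (s - t) <= green s t.+1.
Proof.
move=> ts; rewrite /green.
have -> : (`|t.+1 - s.+1| = s - t)%N by rewrite distnEr; lia.
have -> : (t.+1 + s.+1 = (s - t) + (t + t + 2))%N by lia.
rewrite exprD; set a := r ^+ (s - t); set q := r ^+ (t + t + 2).
have q_le : q <= r ^+ 2 by apply: ler_wiXn2l; rewrite ?ltW //; lia.
rewrite [X in _ <= X](_ : _ = a * ((alpha + 2 * beta * (1 - r))^-1 * (1 - q))); last by ring.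
rewrite mulrC ler_pM2l ?exprn_gt0 //.
apply: le_trans green_factor_ge _.
by rewrite ler_pM2l ?invr_gt0 ?green_den_gt0 // lerD2l lerN2.
Qed.

Lemma hessmx_green_le (s t : 'I_T) :
  (hessmx *m \col_(i < T) green s i.+1) t 0 <= (t == s)%:R.
Proof.
rewrite hessmx_col ?green0 // green_stencil gerBl.
case: (eqVneq T t.+1) => [Tt | _]; last by rewrite mulr0n !mul0r.
by rewrite mulr1n mul1r pmulr_rge0 // subr_ge0 green_antitone // -ltnS -Tt ltn_ord.
Qed.

Lemma green_le_invmx (s t : 'I_T) : green s t.+1 <= invmx hessmx t s.
Proof.
pose e_s : 'cV[R]_T := delta_mx s 0.
have -> : invmx hessmx t s = (invmx hessmx *m e_s) t 0 by rewrite -colE [RHS]mxE.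
have green_le i : (\col_(k < T) green s k.+1) i 0 <= (invmx hessmx *m e_s) i 0.
  apply: (Zmx_monotone hessmx_offdiag alpha_gt0 hessmx_rowsum) => {}i.
  by rewrite mulKVmx ?hessmx_unit // [X in _ <= X]mxE andbT hessmx_green_le.
by have := green_le t; rewrite mxE.
Qed.
End GreenFunction.
End Tracking.

Theorem lemma5 (R : realType) (alpha beta D : R) (T : nat)
  (halpha : 0 < alpha) (hbeta : 0 < beta) (hD : 0 < D) (hT : (1 <= T)%N)
  (theta : 'cV[R]_T) (htheta : inXT D theta) :
  exists A : 'M[R]_T,
    is_argmin alpha beta D theta (A *m theta) /\
    forall t s : 'I_T, (t <= s)%N ->
      alpha / (alpha + beta) * (1 - rho alpha beta) * rho alpha beta ^+ (s - t)
        <= A t s.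
Proof.
have [r_gt0 r_lt1 r_root] := rho_spec halpha hbeta.
set r := rho alpha beta in r_gt0 r_lt1 r_root *.
set H := hessmx T alpha beta.
have H_unit : H \in unitmx := hessmx_unit T halpha hbeta.
exists (alpha *: invmx H); split.
  apply: hessmx_argmin (ltW hD) htheta _ => //.
  by rewrite -scalemxAl -scalemxAr mulKVmx.
move=> t s ts; rewrite mxE.
rewrite (_ : _ * _ * _ = alpha * ((1 - r) / (alpha + beta) * r ^+ (s - t))); last by ring.
rewrite ler_pM2l //; apply: le_trans (green_lower halpha hbeta r_gt0 r_lt1 r_root ts) _.
exact: green_le_invmx.
Qed.
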